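(* Let $\sum_{n=1}^{\infty}x_n$ be a conditionally convergent series of real numbers. Then for any $a,b\in\mathbb{R}$ with $a<b$ there exists a strictly increasing sequence of indices $(k_n)_{n=1}^{\infty}$ such that the subseries $\sum_{n=1}^{\infty}x_{k_n}$ is absolutely convergent and its achievement set $A(x_{k_n})$ contains the interval $[a,b]$.
   Context: For a real sequence $(y_n)$, its achievement set is $A(y_n)=\{\sum_{n\in A}y_n : A\subseteq\mathbb{N}\}$ (only sets $A$ for which the sum converges are taken; for an absolutely convergent series this is every $A$). *)

From Stdlib Require Import Reals.
Open Scope R_scope.

Definition series_converges (x : nat -> R) : Prop :=
  exists l : R, infinite_sum x l.

Definition abs_convergent (x : nat -> R) : Prop :=
  series_converges (fun n => Rabs (x n)).

Definition cond_convergent (x : nat -> R) : Prop :=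
  series_converges x /\ ~ abs_convergent x.

(* Achievement set: t is in A(y) iff t = sum_{n in A} y n for some A ⊆ N
   for which this sum converges.  A subset A is encoded by its indicator. *)
Definition achievement_set (y : nat -> R) (t : R) : Prop :=
  exists A : nat -> bool,
    infinite_sum (fun n => if A n then y n else 0) t.

Definition strictly_increasing (k : nat -> nat) : Prop :=
  forall n m : nat, (n < m)%nat -> (k n < k m)%nat.

From Stdlib Require Import Reals Lra Lia Wf_nat Classical ClassicalEpsilon.
Open Scope R_scope.

(** Fix a budget [C > |a| + |b|].  Walk along [x] and take a positive term
    whenever it is at most half of what remains of the budget [C]; since the
    terms tend to 0 while the positive terms have infinite sum, the taken
    terms sum exactly to [C], and each is at most the sum of the taken terms
    after it.  Doing the same with the negative terms and [-C], the terms
    [|x_k|] of the selected subseries are nonnegative, sum to [2C], and each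
    is dominated by the tail following it; by Kakeya's greedy argument their
    subsums fill [[0, 2C]].  Shifting by the sum [-C] of the negative terms,
    the subsums of the selected subseries fill [[-C, C]], which contains
    [[a, b]]. *)

Definition mask (A : nat -> bool) (y : nat -> R) (n : nat) : R :=
  if A n then y n else 0.

Lemma Un_cv_ext u v l : (forall n, u n = v n) -> Un_cv u l -> Un_cv v l.
Proof.
  intros Huv Hu eps Heps; destruct (Hu eps Heps) as [N HN].
  exists N; intros n Hn; rewrite <- Huv; auto.
Qed.

Lemma Un_cv_const c : Un_cv (fun _ => c) c.
Proof.
  intros eps Heps; exists O; intros n _.
  unfold Rdist; rewrite Rminus_diag, Rabs_R0; lra.
Qed.

Lemma Un_cv_succ u l : Un_cv u l -> Un_cv (fun n => u (S n)) l.
Proof.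
  intros Hu eps Heps; destruct (Hu eps Heps) as [N HN].
  exists N; intros n Hn; apply HN; lia.
Qed.

Lemma infinite_sum_ext f g l :
  (forall n, f n = g n) -> infinite_sum f l -> infinite_sum g l.
Proof. intros Hfg; apply Un_cv_ext; intros n; apply sum_eq; auto. Qed.

Lemma infinite_sum_plus f g lf lg :
  infinite_sum f lf -> infinite_sum g lg ->
  infinite_sum (fun n => f n + g n) (lf + lg).
Proof.
  intros Hf Hg; apply (Un_cv_ext (fun n => sum_f_R0 f n + sum_f_R0 g n)).
  - intros n; symmetry; apply plus_sum.
  - now apply CV_plus.
Qed.

Lemma infinite_sum_minus f g lf lg :
  infinite_sum f lf -> infinite_sum g lg ->
  infinite_sum (fun n => f n - g n) (lf - lg).
Proof.
  intros Hf Hg; apply (Un_cv_ext (fun n => sum_f_R0 f n - sum_f_R0 g n)).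
  - intros n; symmetry; apply minus_sum.
  - now apply CV_minus.
Qed.

Lemma infinite_sum_opp y l :
  infinite_sum y l -> infinite_sum (fun n => - y n) (- l).
Proof.
  intros Hy; apply (Un_cv_ext (opp_seq (sum_f_R0 y))); [|now apply CV_opp].
  unfold opp_seq; induction n as [|n IH]; simpl; [|rewrite <- IH]; ring.
Qed.

Lemma infinite_sum_cv_0 y l : infinite_sum y l -> Un_cv y 0.
Proof.
  intros Hy; apply CV_shift with 1%nat.
  replace 0 with (l - l) by ring.
  apply (Un_cv_ext (fun n => sum_f_R0 y (S n) - sum_f_R0 y n)).
  - intros n; rewrite Nat.add_1_r; simpl; ring.
  - apply CV_minus; [apply Un_cv_succ|]; assumption.
Qed.

Lemma cond_convergent_opp y :
  cond_convergent y -> cond_convergent (fun n => - y n).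
Proof.
  intros [[l Hl] Hnabs]; split.
  - exists (- l); now apply infinite_sum_opp.
  - intros [l' Hl']; apply Hnabs; exists l'.
    revert Hl'; apply infinite_sum_ext; intros n; apply Rabs_Ropp.
Qed.

Lemma sum_f_R0_le_nonneg f m n :
  (forall i, 0 <= f i) -> (m <= n)%nat -> sum_f_R0 f m <= sum_f_R0 f n.
Proof.
  intros Hf Hmn; induction Hmn as [|n _ IH]; simpl; [lra|].
  specialize (Hf (S n)); lra.
Qed.

Lemma sum_f_R0_skip_zeros f m n :
  (m <= n)%nat -> (forall i, (m < i <= n)%nat -> f i = 0) ->
  sum_f_R0 f n = sum_f_R0 f m.
Proof.
  intros Hmn; induction Hmn as [|n Hmn IH]; intros Hzero; [reflexivity|].
  simpl; rewrite IH, (Hzero (S n)) by (lia || intros; apply Hzero; lia); ring.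
Qed.

Lemma sum_f_R0_last_after_zeros f m n :
  (m < n)%nat -> (forall i, (m < i < n)%nat -> f i = 0) ->
  sum_f_R0 f n = sum_f_R0 f m + f n.
Proof.
  intros Hmn Hzero; destruct n as [|n]; [lia|]; simpl.
  rewrite (sum_f_R0_skip_zeros f m n) by (lia || intros; apply Hzero; lia).
  reflexivity.
Qed.

Lemma sum_f_R0_last_only f n :
  (forall i, (i < n)%nat -> f i = 0) -> sum_f_R0 f n = f n.
Proof.
  intros Hzero; destruct n as [|n]; simpl; [reflexivity|].
  rewrite sum_eq_R0 by (intros; apply Hzero; lia); ring.
Qed.

Lemma Rabs_pos_part a : Rabs a = Rmax 0 a + Rmax 0 a - a.
Proof.
  destruct (Rle_dec 0 a).
  - rewrite Rabs_right, Rmax_right; lra.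
  - rewrite Rabs_left1, Rmax_left; lra.
Qed.

Lemma cond_convergent_pos_part_unbounded y :
  cond_convergent y -> ~ has_ub (sum_f_R0 (fun n => Rmax 0 (y n))).
Proof.
  intros [[l Hl] Hnabs] Hub; apply Hnabs.
  assert (Hgrow : Un_growing (sum_f_R0 (fun n => Rmax 0 (y n)))).
  { intros n; simpl; pose proof (Rmax_l 0 (y (S n))); lra. }
  destruct (growing_cv _ Hgrow Hub) as [lp Hlp].
  exists (lp + lp - l).
  apply (infinite_sum_ext (fun n => Rmax 0 (y n) + Rmax 0 (y n) - y n)).
  - intros n; symmetry; apply Rabs_pos_part.
  - apply infinite_sum_minus; [apply infinite_sum_plus|]; assumption.
Qed.

Section Enumeration.

Variable I : nat -> bool.
Hypothesis I_infinite : forall m, exists j, (m <= j)%nat /\ I j = true.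

Lemma next_true_ex m :
  { j | (m <= j)%nat /\ I j = true /\ forall i, (m <= i < j)%nat -> I i = false }.
Proof.
  apply constructive_indefinite_description.
  destruct (dec_inh_nat_subset_has_unique_least_element
              (fun j => (m <= j)%nat /\ I j = true)) as [j [[Hj Hleast] _]].
  - intros n; apply classic.
  - apply I_infinite.
  - exists j; split; [apply Hj|]; split; [apply Hj|].
    intros i Hi; destruct (I i) eqn:E; [|reflexivity].
    specialize (Hleast i (conj (proj1 Hi) E)); lia.
Qed.

Definition next_true m : nat := proj1_sig (next_true_ex m).

Fixpoint enum_true (n : nat) : nat :=
  match n with
  | O => next_true O
  | S n' => next_true (S (enum_true n'))
  end.

Lemma next_true_spec m :
  (m <= next_true m)%nat /\ I (next_true m) = true /\
  forall i, (m <= i < next_true m)%nat -> I i = false.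
Proof. exact (proj2_sig (next_true_ex m)). Qed.

Lemma enum_true_true n : I (enum_true n) = true.
Proof. destruct n; apply next_true_spec. Qed.

Lemma enum_true_lt_succ n : (enum_true n < enum_true (S n))%nat.
Proof. apply next_true_spec. Qed.

Lemma enum_true_strictly_increasing : strictly_increasing enum_true.
Proof.
  intros n m Hnm; induction Hnm as [|m _ IH].
  - apply enum_true_lt_succ.
  - pose proof (enum_true_lt_succ m); lia.
Qed.

Lemma enum_true_ge n : (n <= enum_true n)%nat.
Proof. induction n; [lia|]; pose proof (enum_true_lt_succ n); lia. Qed.

Lemma enum_true_first i : (i < enum_true 0)%nat -> I i = false.
Proof. intros Hi; apply (next_true_spec 0); simpl in Hi; lia. Qed.

Lemma enum_true_gap n i :
  (enum_true n < i < enum_true (S n))%nat -> I i = false.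
Proof. intros Hi; apply (next_true_spec (S (enum_true n))); simpl in Hi; lia. Qed.

Lemma sum_mask_enum_true g n :
  sum_f_R0 (mask I g) (enum_true n) = sum_f_R0 (fun j => g (enum_true j)) n.
Proof.
  unfold mask; induction n as [|n IH]; simpl sum_f_R0 at 2.
  - rewrite sum_f_R0_last_only, enum_true_true; [reflexivity|].
    intros i Hi; rewrite enum_true_first; auto.
  - rewrite (sum_f_R0_last_after_zeros _ (enum_true n)), IH, enum_true_true.
    + reflexivity.
    + apply enum_true_lt_succ.
    + intros i Hi; rewrite enum_true_gap with n i; auto.
Qed.

Lemma infinite_sum_mask_enum_true g l :
  infinite_sum (mask I g) l -> infinite_sum (fun n => g (enum_true n)) l.
Proof.
  intros Hg eps Heps; destruct (Hg eps Heps) as [N HN].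
  exists N; intros n Hn; rewrite <- sum_mask_enum_true.
  apply HN; pose proof (enum_true_ge n); lia.
Qed.

End Enumeration.

Fixpoint greedy_remainder (w : nat -> R) (t : R) (m : nat) : R :=
  match m with
  | O => t
  | S m' =>
      let r := greedy_remainder w t m' in
      if Rle_dec (w m') r then r - w m' else r
  end.

Definition greedy_pick (w : nat -> R) (t : R) (m : nat) : bool :=
  if Rle_dec (w m) (greedy_remainder w t m) then true else false.

(* Greedily take every term that still fits into what remains of [t]: by
   domination the remainder stays below the tail, hence tends to 0. *)
Lemma kakeya_achievement_set (w tail : nat -> R) (t : R) :
  (forall m, tail m = w m + tail (S m)) ->
  Un_cv tail 0 -> (forall m, w m <= tail (S m)) -> 0 <= t <= tail O ->
  achievement_set w t.
Proof.
  intros Htail Htail0 Hdom Ht.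
  exists (greedy_pick w t).
  assert (Hrem : forall m, 0 <= greedy_remainder w t m <= tail m).
  { induction m as [|m IH]; simpl; [exact Ht|].
    specialize (Htail m); specialize (Hdom m).
    destruct (Rle_dec (w m) (greedy_remainder w t m)); lra. }
  assert (Hpartial : forall n,
    sum_f_R0 (mask (greedy_pick w t) w) n = t - greedy_remainder w t (S n)).
  { unfold mask, greedy_pick; induction n as [|n IH]; simpl.
    - destruct (Rle_dec (w 0%nat) t); ring.
    - rewrite IH; simpl; destruct (Rle_dec (w (S n)) _); ring. }
  intros eps Heps; destruct (Htail0 eps Heps) as [N HN].
  exists N; intros n Hn.
  specialize (HN (S n) ltac:(lia)); specialize (Hrem (S n)).
  unfold Rdist in *; rewrite Hpartial, Rminus_0_r in *.
  rewrite Rabs_right in HN by lra.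
  replace (t - greedy_remainder w t (S n) - t)
    with (- greedy_remainder w t (S n)) by ring.
  rewrite Rabs_Ropp, Rabs_right; lra.
Qed.

Definition fits (C v p : R) : bool :=
  if Rlt_dec 0 v then if Rle_dec v ((C - p) / 2) then true else false else false.

Lemma fitsP C v p : fits C v p = true <-> 0 < v /\ v <= (C - p) / 2.
Proof.
  unfold fits; destruct (Rlt_dec 0 v); [destruct (Rle_dec v ((C - p) / 2))|];
    split; intros H; (discriminate || lra || auto).
Qed.

Fixpoint budget_sum (C : R) (y : nat -> R) (m : nat) : R :=
  match m with
  | O => 0
  | S m' => let p := budget_sum C y m' in p + (if fits C (y m') p then y m' else 0)
  end.

Definition budget_pick (C : R) (y : nat -> R) (m : nat) : bool :=
  fits C (y m) (budget_sum C y m).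

Section Budget.

Variables (C : R) (y : nat -> R).
Hypothesis C_pos : 0 < C.

Lemma budget_sum_S m :
  budget_sum C y (S m) = budget_sum C y m + mask (budget_pick C y) y m.
Proof. reflexivity. Qed.

Lemma budget_pick_pos m : budget_pick C y m = true -> 0 < y m.
Proof. intros Hpick; apply fitsP in Hpick; lra. Qed.

Lemma budget_sum_bounds m : 0 <= budget_sum C y m < C.
Proof.
  induction m as [|m IH]; simpl; [lra|].
  destruct (fits C (y m) (budget_sum C y m)) eqn:E; [apply fitsP in E|]; lra.
Qed.

Lemma budget_sum_le m d : budget_sum C y m <= budget_sum C y (m + d).
Proof.
  induction d as [|d IH]; [rewrite Nat.add_0_r; lra|].
  rewrite Nat.add_succ_r, budget_sum_S; unfold mask.
  destruct (budget_pick C y (m + d)) eqn:E; [apply budget_pick_pos in E|]; lra.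
Qed.

(* Taking at most half of the remaining budget leaves at least as much. *)
Lemma budget_pick_tail m :
  0 <= mask (budget_pick C y) y m <= C - budget_sum C y (S m).
Proof.
  pose proof (budget_sum_bounds (S m)) as Hbound.
  rewrite budget_sum_S in *; unfold mask, budget_pick in *.
  destruct (fits C (y m) (budget_sum C y m)) eqn:E; [apply fitsP in E|]; lra.
Qed.

Hypothesis y_cc : cond_convergent y.

Lemma budget_sum_cv : Un_cv (budget_sum C y) C.
Proof.
  intros eps Heps.
  destruct (classic (exists m, C - eps < budget_sum C y m)) as [[m Hm] | Hstuck].
  { exists m; intros n Hn; pose proof (budget_sum_le m (n - m)) as Hle.
    replace (m + (n - m))%nat with n in Hle by lia.
    pose proof (budget_sum_bounds n).
    unfold Rdist; rewrite Rabs_left1; lra. }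
  exfalso; apply (cond_convergent_pos_part_unbounded y y_cc).
  assert (Hlow : forall m, budget_sum C y m <= C - eps).
  { intros m; apply Rnot_lt_le; intros H; apply Hstuck; eauto. }
  destruct y_cc as [[l Hl] _].
  destruct (infinite_sum_cv_0 y l Hl (eps / 2)) as [N HN]; [lra|].
  set (pos := fun n => Rmax 0 (y n)).
  (* Past [N] every positive term is small enough to be taken. *)
  assert (Htaken : forall m, (m >= N)%nat ->
            budget_sum C y (S m) = budget_sum C y m + pos m).
  { intros m Hm; rewrite budget_sum_S; unfold mask, pos.
    destruct (budget_pick C y m) eqn:E.
    - apply budget_pick_pos in E; rewrite Rmax_right; lra.
    - destruct (Rlt_le_dec 0 (y m)) as [Hy|Hy]; [|rewrite Rmax_left; lra].
      exfalso; assert (Hfits : budget_pick C y m = true); [|congruence].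
      specialize (HN m Hm); specialize (Hlow m).
      unfold Rdist in HN; rewrite Rminus_0_r in HN; apply Rabs_def2 in HN.
      apply fitsP; lra. }
  assert (Hpos_sum : forall d, sum_f_R0 pos (N + d) =
            sum_f_R0 pos N + budget_sum C y (S (N + d)) - budget_sum C y (S N)).
  { induction d as [|d IH]; [rewrite Nat.add_0_r; ring|].
    rewrite Nat.add_succ_r; simpl sum_f_R0; rewrite IH, (Htaken (S (N + d))) by lia.
    ring. }
  exists (sum_f_R0 pos N + C); intros r [n ->].
  assert (Hpos : forall i, 0 <= pos i) by (intros; apply Rmax_l).
  destruct (Compare_dec.le_lt_dec n N) as [HnN|HNn].
  - pose proof (sum_f_R0_le_nonneg pos n N Hpos HnN); lra.
  - replace n with (N + (n - N))%nat by lia; rewrite Hpos_sum.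
    pose proof (budget_sum_bounds (S (N + (n - N)))).
    pose proof (budget_sum_bounds (S N)); lra.
Qed.

Lemma budget_pick_infinite m : exists j, (m <= j)%nat /\ budget_pick C y j = true.
Proof.
  apply NNPP; intros Hnone.
  assert (Hconst : forall d, budget_sum C y (m + d) = budget_sum C y m).
  { induction d as [|d IH]; [now rewrite Nat.add_0_r|].
    rewrite Nat.add_succ_r, budget_sum_S, IH; unfold mask.
    destruct (budget_pick C y (m + d)) eqn:E; [|ring].
    exfalso; apply Hnone; exists (m + d)%nat; split; [lia | exact E]. }
  pose proof (budget_sum_bounds m).
  destruct (budget_sum_cv (C - budget_sum C y m)) as [N HN]; [lra|].
  specialize (HN (m + N)%nat ltac:(lia)); rewrite Hconst in HN.
  unfold Rdist in HN; rewrite Rabs_left1 in HN; lra.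
Qed.

Lemma infinite_sum_budget_pick : infinite_sum (mask (budget_pick C y) y) C.
Proof.
  apply (Un_cv_ext (fun n => budget_sum C y (S n))); [|apply Un_cv_succ, budget_sum_cv].
  induction n as [|n IH]; rewrite budget_sum_S; simpl sum_f_R0.
  - change (budget_sum C y 0) with 0; ring.
  - now rewrite IH.
Qed.

End Budget.

Definition selected (C : R) (x : nat -> R) (m : nat) : bool :=
  budget_pick C x m || budget_pick C (fun n => - x n) m.

Section Selection.

Variables (x : nat -> R) (C : R).
Hypotheses (x_cc : cond_convergent x) (C_pos : 0 < C).

Let x_opp_cc : cond_convergent (fun n => - x n) := cond_convergent_opp x x_cc.
Let pos_taken := mask (budget_pick C x) x.
Let neg_taken := mask (budget_pick C (fun n => - x n)) (fun n => - x n).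

Lemma selected_infinite m : exists j, (m <= j)%nat /\ selected C x j = true.
Proof.
  destruct (budget_pick_infinite C x C_pos x_cc m) as [j [Hj Hpick]].
  exists j; split; [exact Hj|]; unfold selected; now rewrite Hpick.
Qed.

Lemma budget_picks_exclusive m :
  budget_pick C x m = true -> budget_pick C (fun n => - x n) m = true -> False.
Proof. intros Hp Hn; apply budget_pick_pos in Hp; apply budget_pick_pos in Hn; lra. Qed.

Lemma mask_selected_abs m :
  mask (selected C x) (fun n => Rabs (x n)) m = pos_taken m + neg_taken m.
Proof.
  unfold pos_taken, neg_taken, mask, selected.
  destruct (budget_pick C x m) eqn:Ep, (budget_pick C (fun n => - x n) m) eqn:En;
    simpl; try apply budget_pick_pos in Ep; try apply budget_pick_pos in En.
  - lra.
  - rewrite Rabs_right; lra.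
  - rewrite Rabs_left; lra.
  - ring.
Qed.

Lemma infinite_sum_selected_abs :
  infinite_sum (mask (selected C x) (fun n => Rabs (x n))) (C + C).
Proof.
  apply (infinite_sum_ext (fun m => pos_taken m + neg_taken m)).
  - intros m; symmetry; apply mask_selected_abs.
  - apply infinite_sum_plus; now apply infinite_sum_budget_pick.
Qed.

Lemma selected_achievement t :
  - C <= t <= C -> exists A, infinite_sum (mask (selected C x) (mask A x)) t.
Proof.
  intros Ht.
  set (w := mask (selected C x) (fun n => Rabs (x n))).
  set (tail := fun m => (C - budget_sum C x m) + (C - budget_sum C (fun n => - x n) m)).
  destruct (kakeya_achievement_set w tail (t + C)) as [B HB].
  - intros m; unfold w, tail; rewrite mask_selected_abs, !budget_sum_S.
    unfold pos_taken, neg_taken; ring.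
  - replace 0 with ((C - C) + (C - C)) by ring.
    apply CV_plus; apply CV_minus; try apply Un_cv_const; now apply budget_sum_cv.
  - intros m; unfold w, tail; rewrite mask_selected_abs.
    pose proof (budget_pick_tail C x C_pos m).
    pose proof (budget_pick_tail C (fun n => - x n) C_pos m).
    unfold pos_taken, neg_taken; lra.
  - unfold tail; simpl; lra.
  - (* a selected negative term enters the subsum iff greedy omits it from [w] *)
    exists (fun m => if budget_pick C (fun n => - x n) m then negb (B m) else B m).
    replace t with (t + C - C) by ring.
    apply (infinite_sum_ext (fun m => mask B w m - neg_taken m)).
    + intros m; pose proof (budget_picks_exclusive m) as Hexcl.
      change (mask B w m) with (if B m then w m else 0).
      unfold w; rewrite mask_selected_abs.
      unfold pos_taken, neg_taken, mask, selected.
      destruct (budget_pick C x m), (budget_pick C (fun n => - x n) m), (B m);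
        simpl; (ring || now exfalso; apply Hexcl).
    + apply infinite_sum_minus; [exact HB | now apply infinite_sum_budget_pick].
Qed.

End Selection.

Theorem mainTheorem1 (x : nat -> R) (hx : cond_convergent x) (a b : R) (hab : a < b) :
  exists k : nat -> nat,
    strictly_increasing k /\
    abs_convergent (fun n => x (k n)) /\
    (forall t : R, a <= t <= b -> achievement_set (fun n => x (k n)) t).
Proof.
  set (C := Rabs a + Rabs b + 1).
  pose proof (Rabs_pos a); pose proof (Rabs_pos b).
  pose proof (Rle_abs b); pose proof (Rle_abs (- a)) as Ha; rewrite Rabs_Ropp in Ha.
  assert (HC : 0 < C) by (unfold C; lra).
  pose proof (selected_infinite x C hx HC) as Hinf.
  set (k := enum_true (selected C x) Hinf).
  exists k; split; [|split].
  - exact (enum_true_strictly_increasing _ Hinf).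
  - exists (C + C); apply (infinite_sum_mask_enum_true _ Hinf (fun n => Rabs (x n))).
    exact (infinite_sum_selected_abs x C hx HC).
  - intros t Ht.
    destruct (selected_achievement x C hx HC t) as [A HA]; [unfold C; lra|].
    exists (fun n => A (k n)).
    exact (infinite_sum_mask_enum_true _ Hinf (mask A x) t HA).
Qed.
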